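(* Let $m<p<p_F(\sigma)=m+\frac{\sigma+2}{N}$ and $Z_0=\frac{(\sigma+2)[m(N+\sigma)-p(N-2)]}{(p-m)^2}$. (i) If a trajectory $(x,y,z)(\eta_1)$ of system (S2) with $z\ge0$ crosses the plane $\{y=-\frac{\sigma+2}{p-m}\}$ from $\{y>-\frac{\sigma+2}{p-m}\}$ into $\{y<-\frac{\sigma+2}{p-m}\}$ at some time, then it remains in $\{y<-\frac{\sigma+2}{p-m}\}$ for all later times. (ii) If a trajectory satisfies $y(\eta_{1,*})=-\frac{\sigma+2}{p-m}$ and $\dot y(\eta_{1,*})=0$ for some $\eta_{1,*}$, then it is contained in the invariant line $\{y=-\frac{\sigma+2}{p-m},\ z=Z_0\}$; in particular no other trajectory is tangent to the plane $\{y=-\frac{\sigma+2}{p-m}\}$.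
   Context: Let $N\geq1$, $m>1$, $\sigma>0$. System (S2) is $$\dot x=x(2-(m-1)y),\quad \dot y=-x-(N-2)y+z-my^2-\tfrac{p-m}{\sigma+2}xy,\quad \dot z=z(\sigma+2+(p-m)y),$$ considered for $x\ge0$, $z\ge0$. *)

From Stdlib Require Import Reals.
Open Scope R_scope.

Definition open_interval (I : R -> Prop) : Prop :=
  (exists t, I t) /\
  (forall s t u, I s -> I u -> s <= t <= u -> I t) /\
  (forall t, I t -> exists e, e > 0 /\ forall s, Rabs (s - t) < e -> I s).

Definition S2_solution (N : nat) (m p sigma : R) (I : R -> Prop)
  (x y z : R -> R) : Prop :=
  open_interval I /\
  forall t, I t ->
    0 <= x t /\ 0 <= z t /\
    derivable_pt_lim x t (x t * (2 - (m - 1) * y t)) /\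
    derivable_pt_lim y t
      (- x t - (INR N - 2) * y t + z t - m * (y t)^2
       - (p - m) / (sigma + 2) * x t * y t) /\
    derivable_pt_lim z t (z t * (sigma + 2 + (p - m) * y t)).

Definition Ycrit (m p sigma : R) : R := - (sigma + 2) / (p - m).
Definition Zcrit (N : nat) (m p sigma : R) : R :=
  (sigma + 2) * (m * (INR N + sigma) - p * (INR N - 2)) / (p - m)^2.

From Pilot Require Import Defs.
From Stdlib Require Import Reals Lra Psatz.
Open Scope R_scope.

(* On the plane y = Y the z-equation degenerates to z' = 0 and the y-equation to
   y' = z - Z0, so the line {y = Y, z = Z0} is invariant, and a Gronwall estimate
   for (y - Y)^2 + (z - Z0)^2 shows no other trajectory reaches it: this is (ii).
   For (i), a downward crossing at eta1 forces z(eta1) < Z0.  Below the plane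
   z' = (p - m) z (y - Y) <= 0, so z stays below Z0; at a first return to the
   plane we would have y' = z - Z0 < 0, so y would have been above Y just
   before, which is absurd. *)

Lemma open_interval_convex (I : R -> Prop) (a b c : R) :
  Defs.open_interval I -> I a -> I b -> a <= c <= b -> I c.
Proof. intros [_ [Hconv _]] Ha Hb Hc. exact (Hconv a c b Ha Hb Hc). Qed.

Lemma open_interval_right_point (I : R -> Prop) (a d : R) :
  Defs.open_interval I -> I a -> 0 < d -> exists h, 0 < h < d /\ I (a + h).
Proof.
  intros [_ [_ Hopen]] Ha Hd. destruct (Hopen a Ha) as [e [He Hball]].
  exists (Rmin d e / 2). split.
  - unfold Rmin; destruct Rle_dec; lra.
  - apply Hball. rewrite Rabs_right; unfold Rmin; destruct Rle_dec; lra.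
Qed.

Lemma continuity_pt_near f x eps : continuity_pt f x -> 0 < eps ->
  exists d, 0 < d /\ forall r, Rabs (r - x) < d -> Rabs (f r - f x) < eps.
Proof.
  intros Hf Heps. destruct (Hf eps Heps) as [d [Hd Hnear]]. exists d. split; [lra|].
  intros r Hr. destruct (Req_dec r x) as [->|Hne].
  - rewrite Rminus_diag, Rabs_R0. exact Heps.
  - apply (Hnear r). split; [split; [exact I | now apply not_eq_sym] | exact Hr].
Qed.

Lemma continuity_pt_affine (f g : R -> R) a b c x :
  continuity_pt f x -> continuity_pt g x ->
  continuity_pt (fun s => a * f s + b * g s + c) x.
Proof.
  intros Hf Hg.
  apply (continuity_pt_plus (fun s => a * f s + b * g s) (fun _ => c)).
  - apply (continuity_pt_plus (fun s => a * f s) (fun s => b * g s));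
      now apply continuity_pt_scal.
  - now apply continuity_pt_const.
Qed.

Lemma derivable_pt_lim_increasing_right f x d :
  derivable_pt_lim f x d -> 0 < d ->
  exists e, 0 < e /\ forall h, 0 < h < e -> f x < f (x + h).
Proof.
  intros Hf Hd. destruct (Hf (d / 2) ltac:(lra)) as [e He].
  exists e. split; [apply cond_pos|]. intros h Hh.
  assert (Hq := He h ltac:(lra) ltac:(rewrite Rabs_right; lra)).
  apply Rabs_def2 in Hq.
  assert (f (x + h) - f x = (f (x + h) - f x) / h * h) by (field; lra).
  nra.
Qed.

Lemma derivable_pt_lim_decreasing_left f x d :
  derivable_pt_lim f x d -> d < 0 ->
  exists e, 0 < e /\ forall h, 0 < h < e -> f x < f (x - h).
Proof.
  intros Hf Hd. destruct (Hf (- d / 2) ltac:(lra)) as [e He].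
  exists e. split; [apply cond_pos|]. intros h Hh.
  assert (Hq := He (- h) ltac:(lra) ltac:(rewrite Rabs_left; lra)).
  apply Rabs_def2 in Hq.
  assert (f (x + - h) - f x = (f (x + - h) - f x) / - h * - h) by (field; lra).
  replace (x - h) with (x + - h) by ring. nra.
Qed.

(* The supremum of the times up to which f stays below c. *)
Lemma first_hitting_time f a b c d :
  a < b -> (forall s, a <= s <= b -> continuity_pt f s) -> c <= f b ->
  0 < d -> (forall s, a < s < a + d -> f s < c) ->
  exists s, a < s <= b /\ f s = c /\ forall r, a < r < s -> f r < c.
Proof.
  intros Hab Hcont Hb Hd Hstart.
  set (S := fun s => a <= s <= b /\ forall r, a < r <= s -> f r < c).
  destruct (completeness S) as [s [Hub Hleast]].
  { exists b. now intros s [Hs _]. }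
  { exists a. split; [lra | intros; lra]. }
  assert (Hbelow : forall r, a < r < s -> f r < c).
  { intros r Hr. destruct (Rlt_or_le (f r) c) as [Hlt | Hge]; [exact Hlt | exfalso].
    enough (s <= r) by lra. apply Hleast. intros s' [_ Hs'].
    destruct (Rle_or_lt s' r) as [Hle | Hgt]; [exact Hle|].
    specialize (Hs' r ltac:(lra)). lra. }
  assert (Has : a < s).
  { set (s0 := a + Rmin d (b - a) / 2).
    enough (s0 <= s) by (unfold s0, Rmin in *; destruct Rle_dec; lra).
    apply Hub. split; [unfold s0, Rmin; destruct Rle_dec; lra|].
    intros r Hr. apply Hstart. unfold s0, Rmin in Hr; destruct Rle_dec; lra. }
  assert (Hsb : s <= b) by (apply Hleast; now intros s' [Hs' _]).
  exists s. split; [lra|]. split; [|exact Hbelow].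
  destruct (Rtotal_order (f s) c) as [Hlt | [Heq | Hgt]]; [exfalso | exact Heq | exfalso].
  - assert (Hsb' : s < b) by (destruct (Req_dec s b) as [->|]; lra).
    destruct (continuity_pt_near f s (c - f s) (Hcont s ltac:(lra)) ltac:(lra))
      as [e [He Hnear]].
    set (s' := s + Rmin e (b - s) / 2).
    enough (s' <= s) by (unfold s', Rmin in *; destruct Rle_dec; lra).
    apply Hub. split; [unfold s', Rmin; destruct Rle_dec; lra|].
    intros r Hr. destruct (Rlt_or_le r s); [apply Hbelow; lra|].
    assert (Hr' := Hnear r ltac:(rewrite Rabs_right; unfold s', Rmin in Hr;
                                 destruct Rle_dec; lra)).
    apply Rabs_def2 in Hr'. lra.
  - destruct (continuity_pt_near f s (f s - c) (Hcont s ltac:(lra)) ltac:(lra))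
      as [e [He Hnear]].
    set (r := s - Rmin e (s - a) / 2).
    assert (Hr : a < r < s /\ s - r < e) by (unfold r, Rmin; destruct Rle_dec; lra).
    assert (Hr' := Hnear r ltac:(rewrite Rabs_left; lra)).
    apply Rabs_def2 in Hr'. specialize (Hbelow r ltac:(lra)). lra.
Qed.

Lemma Rabs_cross_term_le w v a b :
  Rabs (2 * w^2 * a + 2 * w * v * b) <= (2 * Rabs a + Rabs b) * (w^2 + v^2).
Proof.
  assert (Hwv : 2 * (Rabs w * Rabs v) <= w^2 + v^2).
  { pose proof (Rle_0_sqr (Rabs w - Rabs v)). unfold Rsqr in *.
    rewrite <- (pow2_abs w), <- (pow2_abs v). nra. }
  eapply Rle_trans; [apply Rabs_triang|].
  rewrite !Rabs_mult, !Rabs_right, <- RPow_abs, pow2_abs by lra.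
  pose proof (Rabs_pos a). pose proof (Rabs_pos b).
  pose proof (pow2_ge_0 v). pose proof (pow2_ge_0 w). nra.
Qed.

Lemma mvt_exp_weighted u D k a b : a < b ->
  (forall c, a <= c <= b -> derivable_pt_lim u c (D c)) ->
  exists c, a < c < b /\
    u b * exp (k * b) - u a * exp (k * a) = (D c + k * u c) * exp (k * c) * (b - a).
Proof.
  intros Hab Hu.
  destruct (MVT_cor2 (fun s => u s * exp (k * s))
              (fun s => D s * exp (k * s) + u s * (k * exp (k * s))) a b Hab)
    as [c [Hmvt Hc]].
  - intros c Hc. apply (derivable_pt_lim_mult u (fun s => exp (k * s))); [now apply Hu|].
    replace (k * exp (k * c)) with (exp (k * c) * (k * 1)) by ring.
    apply (derivable_pt_lim_comp (fun s => k * s) exp).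
    + apply derivable_pt_lim_scal, derivable_pt_lim_id.
    + apply derivable_pt_lim_exp.
  - exists c. split; [exact Hc|]. rewrite Hmvt. ring.
Qed.

(* Gronwall: if |u'| <= C u and u >= 0, then u e^{-Cs} decreases and u e^{Cs}
   increases, so a zero of u propagates in both directions. *)
Lemma gronwall_zero_forward u D C a b : a < b ->
  (forall c, a <= c <= b -> derivable_pt_lim u c (D c)) ->
  (forall c, a <= c <= b -> 0 <= u c) ->
  (forall c, a <= c <= b -> Rabs (D c) <= C * u c) ->
  u a = 0 -> u b = 0.
Proof.
  intros Hab Hu Hpos Hbnd Ha.
  destruct (mvt_exp_weighted u D (- C) a b Hab Hu) as [c [Hc Hmvt]].
  rewrite Ha in Hmvt. assert (Hc' : a <= c <= b) by lra.
  pose proof (Rle_abs (D c)). pose proof (Hbnd c Hc').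
  pose proof (exp_pos (- C * c)). pose proof (exp_pos (- C * b)).
  pose proof (Hpos b ltac:(lra)).
  assert (0 <= - (D c + - C * u c) * exp (- C * c)) by (apply Rmult_le_pos; lra).
  nra.
Qed.

Lemma gronwall_zero_backward u D C a b : a < b ->
  (forall c, a <= c <= b -> derivable_pt_lim u c (D c)) ->
  (forall c, a <= c <= b -> 0 <= u c) ->
  (forall c, a <= c <= b -> Rabs (D c) <= C * u c) ->
  u b = 0 -> u a = 0.
Proof.
  intros Hab Hu Hpos Hbnd Hb.
  destruct (mvt_exp_weighted u D C a b Hab Hu) as [c [Hc Hmvt]].
  rewrite Hb in Hmvt. assert (Hc' : a <= c <= b) by lra.
  pose proof (Rle_abs (- D c)). rewrite Rabs_Ropp in *. pose proof (Hbnd c Hc').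
  pose proof (exp_pos (C * c)). pose proof (exp_pos (C * a)).
  pose proof (Hpos a ltac:(lra)).
  assert (0 <= (D c + C * u c) * exp (C * c)) by (apply Rmult_le_pos; lra).
  nra.
Qed.

Lemma gronwall_zero_propagates (I : R -> Prop) u D K eta t :
  Defs.open_interval I ->
  (forall s, I s -> derivable_pt_lim u s (D s)) ->
  (forall s, I s -> continuity_pt K s) ->
  (forall s, I s -> 0 <= u s) ->
  (forall s, I s -> Rabs (D s) <= K s * u s) ->
  I eta -> I t -> u eta = 0 -> u t = 0.
Proof.
  intros HI Hu HK Hpos Hbnd Heta Ht H0.
  assert (Hseg : forall a b, a <= b -> I a -> I b ->
            exists C, forall c, a <= c <= b -> Rabs (D c) <= C * u c).
  { intros a b Hab Ha Hb.
    destruct (continuity_ab_maj K a b Hab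
                (fun c Hc => HK c (open_interval_convex I a b c HI Ha Hb Hc)))
      as [cmax [Hmax _]].
    exists (K cmax). intros c Hc.
    assert (Ic : I c) by exact (open_interval_convex I a b c HI Ha Hb Hc).
    eapply Rle_trans; [exact (Hbnd c Ic)|].
    apply Rmult_le_compat_r; [exact (Hpos c Ic) | exact (Hmax c Hc)]. }
  destruct (Rtotal_order eta t) as [Hlt | [<- | Hgt]]; [| exact H0 |].
  - destruct (Hseg eta t) as [C HC]; [lra | exact Heta | exact Ht |].
    apply (gronwall_zero_forward u D C eta t Hlt); [| | exact HC | exact H0];
      intros c Hc; [apply Hu | apply Hpos]; exact (open_interval_convex I eta t c HI Heta Ht Hc).
  - destruct (Hseg t eta) as [C HC]; [lra | exact Ht | exact Heta |].
    apply (gronwall_zero_backward u D C t eta Hgt); [| | exact HC | exact H0];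
      intros c Hc; [apply Hu | apply Hpos]; exact (open_interval_convex I t eta c HI Ht Heta Hc).
Qed.

Lemma derivable_pt_lim_sq_shift f c x l : derivable_pt_lim f x l ->
  derivable_pt_lim (fun s => (f s - c)^2) x (2 * (f x - c) * l).
Proof.
  intros Hf.
  assert (Hfc : derivable_pt_lim (fun s => f s - c) x l).
  { replace l with (l - 0) by ring.
    exact (derivable_pt_lim_minus f (fct_cte c) x l 0 Hf (derivable_pt_lim_const c x)). }
  replace (2 * (f x - c) * l) with (l * (f x - c) + (f x - c) * l) by ring.
  apply (derivable_pt_lim_ext (fun s => (f s - c) * (f s - c))).
  - intros s. ring.
  - exact (derivable_pt_lim_mult (fun s => f s - c) (fun s => f s - c) x l l Hfc Hfc).
Qed.

Section S2.

Variables (N : nat) (m p sigma : R).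
Hypotheses (Hmp : m < p) (Hsigma : 0 < sigma).

Local Notation Y := (Ycrit m p sigma).
Local Notation Z0 := (Zcrit N m p sigma).
Local Notation k := ((p - m) / (sigma + 2)).

(* The x-terms cancel on the plane because k * Y = -1. *)
Lemma S2_ydot_decomp x y z :
  - x - (INR N - 2) * y + z - m * y^2 - k * x * y
  = (z - Z0) + (y - Y) * (- k * x - m * y - (INR N - 2 + m * Y)).
Proof. unfold Ycrit, Zcrit. field. lra. Qed.

Lemma S2_zdot_decomp y z : z * (sigma + 2 + (p - m) * y) = (p - m) * z * (y - Y).
Proof. unfold Ycrit. field. lra. Qed.

Section Trajectory.

Variables (I : R -> Prop) (x y z : R -> R).
Hypothesis Hsol : S2_solution N m p sigma I x y z.

Lemma S2_ydot_on_plane s : I s -> y s = Y -> derivable_pt_lim y s (z s - Z0).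
Proof.
  intros Hs Hy. destruct (proj2 Hsol s Hs) as (_ & _ & _ & Hdy & _).
  rewrite S2_ydot_decomp, Hy, Rminus_diag, Rmult_0_l, Rplus_0_r in Hdy.
  exact Hdy.
Qed.

Lemma S2_continuous s : I s ->
  continuity_pt x s /\ continuity_pt y s /\ continuity_pt z s.
Proof.
  intros Hs. destruct (proj2 Hsol s Hs) as (_ & _ & Hdx & Hdy & Hdz).
  split; [|split]; eapply derivable_continuous_pt, exist; eassumption.
Qed.

Lemma S2_invariant_line eta : I eta -> y eta = Y -> z eta = Z0 ->
  forall t, I t -> y t = Y /\ z t = Z0.
Proof.
  intros Heta Hy Hz t Ht.
  set (A := fun s => - k * x s + (- m) * y s + - (INR N - 2 + m * Y)).
  set (B := fun s => (p - m) * z s + 1).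
  set (u := fun s => (y s - Y)^2 + (z s - Z0)^2).
  set (D := fun s => 2 * (y s - Y)^2 * A s + 2 * (y s - Y) * (z s - Z0) * B s).
  set (K := fun s => 2 * Rabs (A s) + Rabs (B s)).
  assert (Hu : forall s, I s -> derivable_pt_lim u s (D s)).
  { intros s Hs. destruct (proj2 Hsol s Hs) as (_ & _ & _ & Hdy & Hdz).
    replace (D s) with (2 * (y s - Y) * (- x s - (INR N - 2) * y s + z s - m * (y s)^2
                                          - k * x s * y s)
                        + 2 * (z s - Z0) * (z s * (sigma + 2 + (p - m) * y s))).
    - apply (derivable_pt_lim_plus (fun s => (y s - Y)^2) (fun s => (z s - Z0)^2));
        now apply derivable_pt_lim_sq_shift.
    - rewrite S2_ydot_decomp, S2_zdot_decomp. unfold D, A, B. ring. }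
  assert (Hbnd : forall s, I s -> Rabs (D s) <= K s * u s)
    by (intros s _; apply Rabs_cross_term_le).
  assert (HK : forall s, I s -> continuity_pt K s).
  { intros s Hs. destruct (S2_continuous s Hs) as (Hx & Hy' & Hz').
    assert (HA : continuity_pt A s) by now apply continuity_pt_affine.
    assert (HB : continuity_pt B s).
    { apply (continuity_pt_plus (fun s => (p - m) * z s) (fun _ => 1)).
      - now apply continuity_pt_scal.
      - now apply continuity_pt_const. }
    apply (continuity_pt_plus (fun s => 2 * Rabs (A s)) (fun s => Rabs (B s))).
    - apply continuity_pt_scal, (continuity_pt_comp A Rabs), Rcontinuity_abs. exact HA.
    - apply (continuity_pt_comp B Rabs); [exact HB | apply Rcontinuity_abs]. }
  assert (Hpos : forall s, I s -> 0 <= u s)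
    by (intros s _; unfold u; pose proof (pow2_ge_0 (y s - Y));
        pose proof (pow2_ge_0 (z s - Z0)); lra).
  assert (Hut : u t = 0).
  { apply (gronwall_zero_propagates I u D K eta t (proj1 Hsol)); auto.
    unfold u. rewrite Hy, Hz. ring. }
  unfold u in Hut. pose proof (pow2_ge_0 (y t - Y)). pose proof (pow2_ge_0 (z t - Z0)).
  split; nra.
Qed.

Lemma S2_z_nonincreasing_below a b : a < b -> I a -> I b ->
  (forall r, a < r < b -> y r < Y) -> z b <= z a.
Proof.
  intros Hab Ha Hb Hbelow.
  assert (Iab : forall c, a <= c <= b -> I c)
    by (intros c Hc; exact (open_interval_convex I a b c (proj1 Hsol) Ha Hb Hc)).
  destruct (MVT_cor2 z (fun c => z c * (sigma + 2 + (p - m) * y c)) a b Hab)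
    as [c [Hmvt Hc]].
  { intros c Hc. now destruct (proj2 Hsol c (Iab c Hc)) as (_ & _ & _ & _ & Hdz). }
  destruct (proj2 Hsol c (Iab c ltac:(lra))) as (_ & Hzc & _).
  rewrite S2_zdot_decomp in Hmvt. specialize (Hbelow c Hc).
  assert (0 <= (p - m) * z c) by (apply Rmult_le_pos; lra).
  assert (0 <= (p - m) * z c * (Y - y c) * (b - a))
    by (apply Rmult_le_pos; [apply Rmult_le_pos|]; lra).
  nra.
Qed.

Lemma S2_crossing_below_line eta1 d : I eta1 -> y eta1 = Y -> 0 < d ->
  (forall t, eta1 < t < eta1 + d -> I t -> y t < Y) -> z eta1 < Z0.
Proof.
  intros Heta Hy Hd Hafter.
  destruct (Rtotal_order (z eta1) Z0) as [Hlt | [Heq | Hgt]]; [exact Hlt | exfalso | exfalso].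
  - destruct (open_interval_right_point I eta1 d (proj1 Hsol) Heta Hd) as [h [Hh Ih]].
    destruct (S2_invariant_line eta1 Heta Hy Heq (eta1 + h) Ih) as [Hyh _].
    specialize (Hafter (eta1 + h) ltac:(lra) Ih). lra.
  - destruct (derivable_pt_lim_increasing_right y eta1 (z eta1 - Z0)
                (S2_ydot_on_plane eta1 Heta Hy) ltac:(lra)) as [e [He Hincr]].
    destruct (open_interval_right_point I eta1 (Rmin d e) (proj1 Hsol) Heta
                ltac:(now apply Rmin_glb_lt)) as [h [Hh Ih]].
    assert (h < d /\ h < e) by (unfold Rmin in Hh; destruct Rle_dec; lra).
    specialize (Hafter (eta1 + h) ltac:(lra) Ih). specialize (Hincr h ltac:(lra)). lra.
Qed.

Lemma S2_crossing_is_definitive eta1 d : I eta1 -> y eta1 = Y -> 0 < d ->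
  (forall t, eta1 < t < eta1 + d -> I t -> y t < Y) ->
  forall t, I t -> eta1 < t -> y t < Y.
Proof.
  intros Heta Hy Hd Hafter t Ht Hlt.
  destruct (Rlt_or_le (y t) Y) as [Hok | Hge]; [exact Hok | exfalso].
  assert (Iseg : forall c, eta1 <= c <= t -> I c)
    by (intros c Hc; exact (open_interval_convex I eta1 t c (proj1 Hsol) Heta Ht Hc)).
  assert (Hz1 := S2_crossing_below_line eta1 d Heta Hy Hd Hafter).
  destruct (first_hitting_time y eta1 t Y (Rmin d (t - eta1)) Hlt) as (s & Hs & Hys & Hbelow).
  - intros c Hc. exact (proj1 (proj2 (S2_continuous c (Iseg c Hc)))).
  - exact Hge.
  - now apply Rmin_glb_lt; lra.
  - intros c Hc. assert (c < eta1 + d /\ c <= t) by (unfold Rmin in Hc; destruct Rle_dec; lra).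
    apply Hafter; [lra | apply Iseg; lra].
  - assert (Is : I s) by (apply Iseg; lra).
    assert (Hzs := S2_z_nonincreasing_below eta1 s ltac:(lra) Heta Is Hbelow).
    destruct (derivable_pt_lim_decreasing_left y s (z s - Z0)
                (S2_ydot_on_plane s Is Hys) ltac:(lra)) as [e [He Hdecr]].
    set (h := Rmin e (s - eta1) / 2).
    assert (0 < h < e /\ h < s - eta1) by (unfold h, Rmin; destruct Rle_dec; lra).
    specialize (Hdecr h ltac:(lra)). specialize (Hbelow (s - h) ltac:(lra)). lra.
Qed.

Lemma S2_tangency_on_line eta : I eta -> y eta = Y -> derivable_pt_lim y eta 0 ->
  forall t, I t -> y t = Y /\ z t = Z0.
Proof.
  intros Heta Hy Hdy.
  apply (S2_invariant_line eta Heta Hy).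
  assert (Hlim := uniqueness_limite y eta _ _ (S2_ydot_on_plane eta Heta Hy) Hdy). lra.
Qed.

End Trajectory.

End S2.

Theorem lemma5p2 (N : nat) (m p sigma : R) :
  (1 <= N)%nat -> 1 < m -> 0 < sigma ->
  m < p -> p < m + (sigma + 2) / INR N ->
  (forall (I : R -> Prop) (x y z : R -> R) (eta1 : R),
     S2_solution N m p sigma I x y z -> I eta1 ->
     y eta1 = Ycrit m p sigma ->
     (exists delta, delta > 0 /\
        (forall t, eta1 - delta < t < eta1 -> I t -> y t > Ycrit m p sigma) /\
        (forall t, eta1 < t < eta1 + delta -> I t -> y t < Ycrit m p sigma)) ->
     forall t, I t -> eta1 < t -> y t < Ycrit m p sigma) /\
  (forall (I : R -> Prop) (x y z : R -> R) (eta : R),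
     S2_solution N m p sigma I x y z -> I eta ->
     y eta = Ycrit m p sigma -> derivable_pt_lim y eta 0 ->
     forall t, I t -> y t = Ycrit m p sigma /\ z t = Zcrit N m p sigma).
Proof.
  intros _ _ Hsigma Hmp _. split.
  - intros I x y z eta1 Hsol Heta Hy (delta & Hdelta & _ & Hafter).
    exact (S2_crossing_is_definitive N m p sigma Hmp Hsigma I x y z Hsol
             eta1 delta Heta Hy Hdelta Hafter).
  - intros I x y z eta Hsol.
    exact (S2_tangency_on_line N m p sigma Hmp Hsigma I x y z Hsol eta).
Qed.
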